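(* Let $G$ be a Frattini-injective pro-$p$ group. Then every finitely generated subgroup $H$ of $G$ satisfies: if $K$ is an open subgroup of $H$, then $d(K) \geq d(H)$.
   Context: $p$ is a prime; subgroups are closed. $d(H)$ is the minimal cardinality of a topological generating set of $H$. A pro-$p$ group $G$ is Frattini-injective if distinct finitely generated subgroups of $G$ have distinct Frattini subgroups. *)

From mathcomp Require Import all_boot all_order.
From mathcomp Require Import all_classical.
From mathcomp Require Import topology separation_axioms compact.
Set Implicit Arguments. Unset Strict Implicit. Unset Printing Implicit Defensive.
Local Open Scope classical_set_scope.

Section ProP.
Variables (T : topologicalType) (mul : T -> T -> T) (inv : T -> T) (one : T).

Definition group_axioms :=
  [/\ (forall x y z, mul x (mul y z) = mul (mul x y) z),
      (forall x, mul one x = x) & (forall x, mul (inv x) x = one)].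

Definition topological_group :=
  group_axioms /\ continuous (fun xy : T * T => mul xy.1 xy.2) /\ continuous inv.

Definition profinite_group :=
  [/\ topological_group, compact [set: T], hausdorff_space T
    & totally_disconnected [set: T]].

Definition is_subgroup (H : set T) :=
  [/\ H one, (forall x y, H x -> H y -> H (mul x y)) & (forall x, H x -> H (inv x))].

Definition is_normal (N : set T) := forall g x, N x -> N (mul (mul (inv g) x) g).

(* the index of N in G is a power of p: there are exactly p^k left cosets of N *)
Definition index_is_p_power (p : nat) (N : set T) :=
  exists k : nat, exists f : 'I_(p ^ k) -> T,
    forall g : T, exists! i : 'I_(p ^ k), exists x, N x /\ g = mul (f i) x.

Definition pro_p_group (p : nat) :=
  [/\ prime p, profinite_group &
      forall N : set T, is_subgroup N -> is_normal N -> open N -> index_is_p_power p N].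

Definition abs_gen (A : set T) : set T :=
  \bigcap_(S in [set S | is_subgroup S /\ A `<=` S]) S.
Definition top_gen (A : set T) : set T := closure (abs_gen A).

(* H is topologically generated by (the image of) n elements, i.e. by a set of
   cardinality at most n *)
Definition gen_by (H : set T) (n : nat) :=
  exists f : 'I_n -> T, top_gen (range f) = H.

Definition fin_gen (H : set T) := exists n, gen_by H n.

(* d(H): minimal cardinality of a topological generating set (meaningful for
   finitely generated H) *)
Definition d (H : set T) : nat :=
  xget 0%N [set n | gen_by H n /\ forall m, gen_by H m -> (n <= m)%N].

Definition open_in (H M : set T) := exists U : set T, open U /\ M = H `&` U.
Definition open_subgroup_of (H K : set T) :=
  [/\ is_subgroup K, K `<=` H & open_in H K].

Definition maximal_open_subgroup (H M : set T) :=
  [/\ open_subgroup_of H M, M <> H &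
      forall L, open_subgroup_of H L -> M `<=` L -> L = M \/ L = H].

(* Frattini subgroup: intersection of the maximal open subgroups of H (H if none) *)
Definition Frattini (H : set T) : set T :=
  H `&` \bigcap_(M in [set M | maximal_open_subgroup H M]) M.

Definition Frattini_injective :=
  forall H1 H2 : set T, fin_gen H1 -> fin_gen H2 ->
    Frattini H1 = Frattini H2 -> H1 = H2.

End ProP.

(* In a pro-p group every maximal open subgroup of a closed subgroup H contains
   the p-th powers and commutators of H, since it does so in the finite p-group
   quotients of H; consequently the Frattini subgroup of a maximal open
   subgroup M of H lies in that of H.  If M is generated by n elements but H is
   not, the reverse inclusion holds as well: given a maximal open subgroup N of
   M missing an element y of Frattini(H), one replaces a generator x of M
   outside N by an element of H outside M, and the other generators by suitable
   x^i-translates lying in N; these n elements lie in a maximal open subgroup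
   M0 of H, and comparing exponents of x forces N <= M0, then M <= M0 via y, a
   contradiction.  Frattini-injectivity then gives M = H, which is absurd, so
   H is n-generated.  An open subgroup K of H is finitely generated (Schreier)
   and is reached from H by a finite chain of maximal open subgroups, whence
   d(H) <= d(K). *)

From Pilot Require Import Defs.
From mathcomp Require Import all_boot all_order.
From mathcomp Require Import all_fingroup all_solvable.
From mathcomp Require Import all_classical.
From mathcomp Require Import topology separation_axioms compact.
Set Implicit Arguments. Unset Strict Implicit. Unset Printing Implicit Defensive.
Local Open Scope classical_set_scope.

Lemma compact_finite_nbhs_cover (T : topologicalType) (C : set T) (O : T -> set T) :
  compact C -> (forall x, C x -> nbhs x (O x)) ->
  exists R : seq T, (forall r, r \in R -> C r) /\ forall y, C y -> exists2 r, r \in R & O r y.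
Proof.
move=> cC nO; apply: contrapT => noR.
pose cov (R : seq T) := [set y | exists2 r, r \in R & O r y].
pose F := filter_from [set R : seq T | forall r, r \in R -> C r] (fun R => C `\` cov R).
have FF : Filter F.
  apply: filter_from_filter; first by exists [::].
  move=> R1 R2 R1C R2C; exists (R1 ++ R2); first by move=> r; rewrite mem_cat => /orP [/R1C|/R2C].
  move=> y [Cy ncov]; split; split=> // -[r rR Ory]; apply: ncov.
    by exists r; rewrite // mem_cat rR.
  by exists r; rewrite // mem_cat rR orbT.
have PF : ProperFilter F.
  apply: filter_from_proper => R RC; apply: contrapT => R0; apply: noR; exists R; split=> // y Cy.
  by apply: contrapT => ncov; apply: R0; exists y.
have FC : F C by exists [::] => // y [].
have [z [Cz clz]] := cC F PF FC.
have Fz : F (C `\` cov [:: z]) by exists [:: z] => // r; rewrite inE => /eqP ->.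
have [y [[_ ncov] Oy]] := clz _ _ Fz (nO z Cz).
by apply: ncov; exists z; rewrite ?inE.
Qed.

Section CompactHausdorff.
Variable T : topologicalType.
Hypotheses (T_compact : compact [set: T]) (T_hausdorff : hausdorff_space T).

Lemma clopen_separation_closed x (Z : set T) : closed Z ->
  (forall z, Z z -> exists C, [/\ clopen C, C x & ~ C z]) ->
  exists C, [/\ clopen C, C x & C `&` Z = set0].
Proof.
move=> cZ sepZ; apply: contrapT => noC.
pose F := filter_from [set C : set T | clopen C /\ C x] (fun C => C `&` Z).
have FF : Filter F.
  apply: filter_from_filter; first by exists setT; split => //; exact: clopenT.
  move=> A B [cA Ax] [cB Bx]; exists (A `&` B); first by split => //; exact: clopenI.
  by move=> y [[Ay By] Zy].
have PF : ProperFilter F.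
  by apply: filter_from_proper => C [cC Cx]; apply/set0P/eqP => C0; apply: noC; exists C.
have [z [_ clz]] := T_compact PF filterT.
have FZ : F Z by exists setT; [split => //; exact: clopenT|move=> y []].
have Zz : Z z.
  apply: contrapT => nZz.
  have : nbhs z (~` Z) by apply: open_nbhs_nbhs; split => //; exact: closed_openC.
  by case/(clz _ _ FZ) => y [].
have [C [cC Cx nCz]] := sepZ z Zz.
have FC : F C by exists C => // y [].
have : nbhs z (~` C) by apply: open_nbhs_nbhs; split => //; case: cC => _ /closed_openC.
by case/(clz _ _ FC) => y [].
Qed.

Definition quasi_component (x : T) :=
  \bigcap_(C in [set C : set T | clopen C /\ C x]) C.

Lemma quasi_component_closed x : closed (quasi_component x).
Proof. by apply: closed_bigI => C [[]]. Qed.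

Lemma quasi_component_open_cover x (U V : set T) : open U -> open V ->
  U `&` V = set0 -> quasi_component x `<=` U `|` V -> U x ->
  quasi_component x `<=` U.
Proof.
move=> oU oV UV0 QUV Ux.
have sep z : ~ (U `|` V) z -> exists C, [/\ clopen C, C x & ~ C z].
  move=> nUVz; have /existsNP [C /not_implyP [[cC Cx] nCz]] : ~ quasi_component x z.
    by move=> /QUV.
  by exists C.
have [C [[oC cC] Cx CUV0]] :=
  clopen_separation_closed (open_closedC (openU oU oV)) sep.
have CUV : C `<=` U `|` V.
  by move=> q Cq; apply: contrapT => nq; have : (C `&` ~` (U `|` V)) q by []; rewrite CUV0.
have CU : C `&` U = C `&` ~` V.
  apply/seteqP; split=> q [Cq] => [Uq|nVq]; split => //.
    by move=> Vq; have : (U `&` V) q by []; rewrite UV0.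
  by case: (CUV q Cq).
have cCU : clopen (C `&` U).
  split; first exact: openI.
  by rewrite CU; apply: closedI => //; exact: open_closedC.
by move=> q /(_ (C `&` U)) [].
Qed.

(* Separate the two relatively clopen pieces of the quasi-component by open
   sets (compact Hausdorff spaces are normal); the quasi-component cannot be
   split by such a pair. *)
Lemma quasi_component_connected x : connected (quasi_component x).
Proof.
set Q := quasi_component x.
move=> B [b Bb] [O oO BE] [Cl cCl BE'].
have cB : closed B by rewrite BE'; apply: closedI => //; exact: quasi_component_closed.
pose A := Q `&` ~` O.
have cA : closed A.
  by apply: closedI; [exact: quasi_component_closed|exact: open_closedC].
have BnA : set_nbhs B (~` A).
  apply/set_nbhsP; exists (~` A); split => //; first exact: closed_openC.
  by move=> q Bq [Qq]; apply; move: Bq; rewrite BE => -[].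
have [V BV clVA] := compact_normal T_hausdorff T_compact cB BnA.
pose U1 := V°; pose U2 := ~` closure V.
have oU1 : open U1 by exact: open_interior.
have oU2 : open U2 by exact/closed_openC/closed_closure.
have BU1 : B `<=` U1 by move=> q Bq; exact: BV.
have AU2 : A `<=` U2 by move=> q Aq Vq; exact: (clVA q Vq).
have U12 : U1 `&` U2 = set0.
  by apply/seteqP; split => // q [/interior_subset Vq]; apply; exact: subset_closure.
have QU : Q `<=` U1 `|` U2.
  by move=> q Qq; have [Oq|nOq] := pselect (O q); [left; apply: BU1; rewrite BE|right; exact: AU2].
have [Bx|nBx] := pselect (B x).
  have QU1 := quasi_component_open_cover oU1 oU2 U12 QU (BU1 x Bx).
  apply/seteqP; split; first by rewrite BE => q [].
  move=> q Qq; apply: contrapT => nBq.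
  have Aq : A q by split => // Oq; apply: nBq; rewrite BE.
  have : (U1 `&` U2) q by split; [exact: QU1|exact: AU2].
  by rewrite U12.
have U21 : U2 `&` U1 = set0 by rewrite setIC.
have QU' : Q `<=` U2 `|` U1 by rewrite setUC.
have Qx : Q x by move=> C [].
have Ax : A x by split => // Ox; apply: nBx; rewrite BE.
have QU2 := quasi_component_open_cover oU2 oU1 U21 QU' (AU2 x Ax).
have Qb : Q b by move: Bb; rewrite BE => -[].
have : (U1 `&` U2) b by split; [exact: BU1|exact: QU2].
by rewrite U12.
Qed.

Lemma totally_disconnected_zero_dimensional :
  totally_disconnected [set: T] -> zero_dimensional T.
Proof.
move=> tdT x y /eqP xy.
suff /existsNP [C /not_implyP [[cC Cx] nCy]] : ~ quasi_component x y by exists C.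
move=> Qxy; apply: xy.
have Qxx : quasi_component x x by move=> C [].
have := connected_component_max Qxx (@subsetT _ _) (@quasi_component_connected x) Qxy.
by rewrite tdT.
Qed.

Lemma clopen_nbhs_sub : totally_disconnected [set: T] ->
  forall x (U : set T), open U -> U x -> exists C, [/\ clopen C, C x & C `<=` U].
Proof.
move=> tdT x U oU Ux.
have zdT := totally_disconnected_zero_dimensional tdT.
have [C [Cx cC] CU] : filter_from [set D | D x /\ clopen D] id U.
  by apply: zero_dimensional_cvg => //; exact: open_nbhs_nbhs.
by exists C.
Qed.

End CompactHausdorff.

Section TopologicalGroup.
Variables (T : topologicalType) (mul : T -> T -> T) (inv : T -> T) (one : T).
Local Notation "x ** y" := (mul x y) (at level 40, left associativity).
Local Notation subgroup := (is_subgroup mul inv one).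
Local Notation abs_gen := (abs_gen mul inv one).
Local Notation top_gen := (top_gen mul inv one).
Local Notation gen_by := (gen_by mul inv one).
Local Notation fin_gen := (fin_gen mul inv one).
Local Notation open_subgroup_of := (open_subgroup_of mul inv one).
Local Notation maximal_open := (maximal_open_subgroup mul inv one).
Local Notation Frattini := (Defs.Frattini mul inv one).

Section Group.
Hypothesis T_group : group_axioms mul inv one.

Lemma tmulgA x y z : x ** (y ** z) = x ** y ** z. Proof. by case: T_group. Qed.
Lemma tmul1g x : one ** x = x. Proof. by case: T_group. Qed.
Lemma tmulVg x : inv x ** x = one. Proof. by case: T_group. Qed.

Lemma tmulgV x : x ** inv x = one.
Proof.
rewrite -[x ** inv x]tmul1g -(tmulVg (inv x)) -tmulgA (tmulgA (inv x)) tmulVg.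
by rewrite tmul1g tmulVg.
Qed.

Lemma tmulg1 x : x ** one = x. Proof. by rewrite -(tmulVg x) tmulgA tmulgV tmul1g. Qed.
Lemma tmulKg x y : inv x ** (x ** y) = y. Proof. by rewrite tmulgA tmulVg tmul1g. Qed.
Lemma tmulKVg x y : x ** (inv x ** y) = y. Proof. by rewrite tmulgA tmulgV tmul1g. Qed.
Lemma tmulgK x y : y ** x ** inv x = y. Proof. by rewrite -tmulgA tmulgV tmulg1. Qed.
Lemma tmulgKV x y : y ** inv x ** x = y. Proof. by rewrite -tmulgA tmulVg tmulg1. Qed.

Lemma tmulgI x y z : x ** y = x ** z -> y = z.
Proof. by move=> e; rewrite -(tmulKg x y) e tmulKg. Qed.
Lemma tmulIg x y z : y ** x = z ** x -> y = z.
Proof. by move=> e; rewrite -(tmulgK x y) e tmulgK. Qed.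

Lemma tinvgK x : inv (inv x) = x.
Proof. by apply: (@tmulIg (inv x)); rewrite tmulVg tmulgV. Qed.
Lemma tinvMg x y : inv (x ** y) = inv y ** inv x.
Proof. by apply: (@tmulgI (x ** y)); rewrite tmulgV -tmulgA tmulKVg tmulgV. Qed.
Lemma tinvg1 : inv one = one.
Proof. by rewrite -[inv one]tmulg1 tmulVg. Qed.

Fixpoint texp (x : T) (n : nat) : T := if n is n'.+1 then x ** texp x n' else one.

Lemma texpD x m n : texp x (m + n) = texp x m ** texp x n.
Proof. by elim: m => [|m IH] /=; rewrite ?tmul1g // IH tmulgA. Qed.
Lemma texpSr x n : texp x n.+1 = texp x n ** x.
Proof. by rewrite -addn1 texpD /= tmulg1. Qed.
Lemma texpM x m n : texp x (m * n) = texp (texp x m) n.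
Proof. by elim: n => [|n IH]; rewrite ?muln0 //= mulnS texpD IH. Qed.

Section Subgroup.
Variable S : set T.
Hypothesis S_subgroup : subgroup S.

Lemma subgroup1 : S one. Proof. by case: S_subgroup. Qed.
Lemma subgroupM x y : S x -> S y -> S (x ** y).
Proof. by case: S_subgroup => _ + _; apply. Qed.
Lemma subgroupV x : S x -> S (inv x).
Proof. by case: S_subgroup => _ _; apply. Qed.
Lemma subgroupX x n : S x -> S (texp x n).
Proof. by move=> Sx; elim: n => [|n IH] /=; [exact: subgroup1|exact: subgroupM]. Qed.
Lemma subgroupMl x y : S x -> S (x ** y) -> S y.
Proof. by move=> Sx Sxy; rewrite -(tmulKg x y); exact: subgroupM (subgroupV Sx) Sxy. Qed.
Lemma subgroupMr x y : S y -> S (x ** y) -> S x.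
Proof. by move=> Sy Sxy; rewrite -(tmulgK y x); exact: subgroupM Sxy (subgroupV Sy). Qed.

End Subgroup.

Lemma subgroupT : subgroup setT. Proof. by []. Qed.

Lemma subgroupI S1 S2 : subgroup S1 -> subgroup S2 -> subgroup (S1 `&` S2).
Proof.
move=> sS1 sS2; split; first by split; exact: subgroup1.
- by move=> x y [? ?] [? ?]; split; exact: subgroupM.
- by move=> x [? ?]; split; exact: subgroupV.
Qed.

Lemma abs_gen_subgroup A : subgroup (abs_gen A).
Proof.
split=> [S [sS _]|x y Ax Ay S [sS AS]|x Ax S [sS AS]]; first exact: subgroup1.
- by apply: subgroupM => //; [exact: Ax|exact: Ay].
- by apply: subgroupV => //; exact: Ax.
Qed.

Lemma sub_abs_gen A : A `<=` abs_gen A.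
Proof. by move=> x Ax S [_]; apply. Qed.

Lemma abs_gen_subG A S : subgroup S -> A `<=` S -> abs_gen A `<=` S.
Proof. by move=> sS AS x; apply. Qed.

Lemma sub_top_gen A : A `<=` top_gen A.
Proof. by move=> x /sub_abs_gen; exact: subset_closure. Qed.

Lemma top_gen_closed A : closed (top_gen A).
Proof. exact: closed_closure. Qed.

Lemma top_gen_subG A S : subgroup S -> closed S -> A `<=` S -> top_gen A `<=` S.
Proof.
by move=> sS cS AS; rewrite (closure_id S).1 //; apply: closureS; exact: abs_gen_subG.
Qed.

Lemma top_gen_id S : subgroup S -> closed S -> top_gen S = S.
Proof. by move=> sS cS; apply/seteqP; split; [exact: top_gen_subG|exact: sub_top_gen]. Qed.

(* An open normal subgroup with a transversal of its left cosets indexed by a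
   finite type: the data of a finite quotient of [T]. *)
Record normal_transversal (I : finType) := NormalTransversal {
  nt_ker : set T;
  nt_rep : I -> T;
  nt_subgroup : subgroup nt_ker;
  nt_normal : is_normal mul inv nt_ker;
  nt_open : open nt_ker;
  nt_repP : forall g, exists! i, exists x, nt_ker x /\ g = nt_rep i ** x }.
Arguments nt_subgroup {I}.
Arguments nt_normal {I}.
Arguments nt_open {I}.
Arguments nt_repP {I}.

Section CosetAction.
Variables (I : finType) (Q : normal_transversal I).
Local Notation W := (nt_ker Q).
Local Notation f := (nt_rep Q).
Local Notation sW := (nt_subgroup Q).

Lemma nt_ker_conj g x : W x -> W (g ** x ** inv g).
Proof. by move=> /(nt_normal Q (inv g)); rewrite tinvgK. Qed.

Definition coset_index (g : T) : I := projT1 (cid (nt_repP Q g)).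

Lemma coset_indexP g : exists x, W x /\ g = f (coset_index g) ** x.
Proof. exact: (projT2 (cid (nt_repP Q g))).1. Qed.

Lemma coset_index_eq g i : (exists x, W x /\ g = f i ** x) -> coset_index g = i.
Proof.
by move=> gi; have [j [_ uj]] := nt_repP Q g; rewrite -(uj _ (coset_indexP g)) (uj _ gi).
Qed.

Lemma coset_index_rep i : coset_index (f i) = i.
Proof. by apply: coset_index_eq; exists one; rewrite tmulg1; split => //; exact: subgroup1 sW. Qed.

Lemma coset_index_eqP g h : coset_index g = coset_index h <-> W (inv g ** h).
Proof.
have [x [Wx gE]] := coset_indexP g; split=> [e|Wgh].
  have [y [Wy hE]] := coset_indexP h.
  rewrite gE hE e tinvMg -tmulgA tmulKg.
  exact: (subgroupM sW (subgroupV sW Wx) Wy).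
symmetry; apply: coset_index_eq; exists (x ** (inv g ** h)).
by split; [exact: (subgroupM sW Wx Wgh)|rewrite tmulgA -gE tmulKVg].
Qed.

Lemma coset_perm_subproof g : injective (fun i => coset_index (inv g ** f i)).
Proof.
move=> i j /coset_index_eqP; rewrite tinvMg tinvgK -tmulgA tmulKVg.
by move/coset_index_eqP; rewrite !coset_index_rep.
Qed.

(* [coset_perm g] is left multiplication by [inv g] on the left cosets of [W]:
   permutations compose left to right, so this makes [coset_perm] a morphism. *)
Definition coset_perm (g : T) : {perm I} := perm (@coset_perm_subproof g).

Lemma coset_permE g i : coset_perm g i = coset_index (inv g ** f i).
Proof. by rewrite permE. Qed.

Lemma coset_permM g h : coset_perm (g ** h) = (coset_perm g * coset_perm h)%g.
Proof.
apply/permP => i; rewrite permM !coset_permE.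
have [x [Wx E]] := coset_indexP (inv g ** f i).
set c := coset_index (inv g ** f i) in E *.
have -> : inv (g ** h) ** f i = inv h ** f c ** x by rewrite tinvMg -tmulgA E tmulgA.
apply/coset_index_eqP; rewrite tinvMg -tmulgA tmulVg tmulg1.
exact: (subgroupV sW Wx).
Qed.

Lemma coset_perm1 : coset_perm one = 1%g.
Proof. by apply/permP => i; rewrite coset_permE perm1 tinvg1 tmul1g coset_index_rep. Qed.

Lemma coset_permV g : coset_perm (inv g) = (coset_perm g)^-1%g.
Proof. by apply: (mulgI (coset_perm g)); rewrite -coset_permM mulgV tmulgV coset_perm1. Qed.

Lemma coset_permX g m : coset_perm (texp g m) = (coset_perm g ^+ m)%g.
Proof. by elim: m => [|m IH] /=; rewrite ?coset_perm1 // coset_permM IH expgS. Qed.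

Lemma coset_perm_eqP g h : coset_perm g = coset_perm h <-> W (inv g ** h).
Proof.
split=> [e|Wgh].
  suff Wi z : coset_perm z = 1%g -> W z by apply: Wi; rewrite coset_permM coset_permV e mulVg.
  move=> /(congr1 (fun s : {perm I} => s (coset_index one))).
  rewrite coset_permE perm1 -{2}(coset_index_rep (coset_index one)) => /coset_index_eqP.
  rewrite tinvMg tinvgK => /(nt_ker_conj (f (coset_index one))).
  by rewrite !tmulgA tmulgV tmul1g tmulgK.
apply/permP => i; rewrite !coset_permE; apply/coset_index_eqP.
have Wgh' : W (g ** inv h).
  by have := nt_ker_conj g (subgroupV sW Wgh); rewrite tinvMg tinvgK tmulgA tmulgK.
by have := nt_ker_conj (inv (f i)) Wgh'; rewrite tinvMg !tinvgK !tmulgA.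
Qed.

Definition coset_image (A : set T) : {set {perm I}} :=
  finset (fun s => `[< exists2 a, A a & coset_perm a = s >]).

Lemma mem_coset_image (A : set T) a : A a -> coset_perm a \in coset_image A.
Proof. by move=> Aa; rewrite inE; apply/asboolP; exists a. Qed.

Lemma coset_imageP (A : set T) s : s \in coset_image A -> exists2 a, A a & coset_perm a = s.
Proof. by rewrite inE => /asboolP. Qed.

Lemma coset_image_group_set (A : set T) : subgroup A -> group_set (coset_image A).
Proof.
move=> sA; apply/group_setP; split.
  by rewrite -coset_perm1; exact: (mem_coset_image (subgroup1 sA)).
move=> _ _ /coset_imageP [a Aa <-] /coset_imageP [b Ab <-].
by rewrite -coset_permM; exact: (mem_coset_image (subgroupM sA Aa Ab)).
Qed.

Canonical coset_image_group (A : set T) (sA : subgroup A) :=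
  Group (coset_image_group_set sA).

Lemma coset_imageS (A B : set T) : A `<=` B -> coset_image A \subset coset_image B.
Proof.
by move=> AB; apply/fintype.subsetP => _ /coset_imageP [a Aa <-]; exact/mem_coset_image/AB.
Qed.

Section Lift.
Variables (H A : set T).
Hypotheses (sH : subgroup H) (sA : subgroup A) (AH : A `<=` H)
  (WHA : forall y, W y -> H y -> A y).

Lemma coset_image_lift x : H x -> coset_perm x \in coset_image A -> A x.
Proof.
move=> Hx /coset_imageP [a Aa /coset_perm_eqP Wax].
have Hax : H (inv a ** x) by exact: (subgroupM sH (subgroupV sH (AH Aa)) Hx).
by rewrite -(tmulKVg a x); exact: (subgroupM sA Aa (WHA Wax Hax)).
Qed.

Lemma sub_of_coset_image_sub (B : set T) : B `<=` H ->
  coset_image B \subset coset_image A -> B `<=` A.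
Proof.
move=> BH /fintype.subsetP BA b Bb.
exact: coset_image_lift (BH _ Bb) (BA _ (mem_coset_image Bb)).
Qed.

End Lift.

Lemma card_coset_image_lt (L M : set T) : subgroup L -> subgroup M -> M `<=` L ->
  (forall y, W y -> L y -> M y) -> M <> L -> #|coset_image M| < #|coset_image L|.
Proof.
move=> sL sM ML WM MneL; apply: proper_card; rewrite fintype.properE coset_imageS //=.
apply/negP => LM; apply: MneL; apply/seteqP; split=> //.
exact: (sub_of_coset_image_sub sL sM ML WM (fun _ h => h) LM).
Qed.

Lemma card_coset_imageT : #|coset_image setT| = #|I|.
Proof.
have rep_inj : injective (fun i => coset_perm (f i)).
  by move=> i j /coset_perm_eqP /coset_index_eqP; rewrite !coset_index_rep.
suff -> : coset_image setT = (fun i => coset_perm (f i)) @: [set: I]%SET.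
  by rewrite card_imset // cardsT.
apply/setP => s; apply/idP/imsetP => [/coset_imageP [a _ <-]|[i _ ->]].
  exists (coset_index a) => //; symmetry; apply/coset_perm_eqP.
  by have [x [Wx aE]] := coset_indexP a; rewrite {2}aE tmulKg.
exact: mem_coset_image.
Qed.

Lemma coset_image_pgroup p k (A : set T) (sA : subgroup A) :
  #|I| = (p ^ k)%N -> prime p -> pgroup p (coset_image_group sA).
Proof.
move=> cardI pp; apply: (@pgroupS _ _ (coset_image_group subgroupT)).
  exact: coset_imageS.
by rewrite /pgroup /= card_coset_imageT cardI pnatX pnat_id.
Qed.

End CosetAction.

Section Topological.
Hypotheses (mul_continuous : continuous (fun xy : T * T => xy.1 ** xy.2))
  (inv_continuous : continuous inv).

Lemma near_mul x y B : nbhs (x ** y) B ->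
  exists P Q, [/\ nbhs x P, nbhs y Q & forall a b, P a -> Q b -> B (a ** b)].
Proof.
move=> /(@mul_continuous (x, y)) [[P Q] [/= Px Qy] PQB].
by exists P, Q; split => // a b Pa Qb; exact: (PQB (a, b)).
Qed.

Lemma nbhs_lmul a x B : nbhs (a ** x) B -> nbhs x [set y | B (a ** y)].
Proof.
move=> /near_mul [P [Q [Pa Qx PQB]]]; apply: filterS Qx => y Qy.
exact: PQB (nbhs_singleton Pa) Qy.
Qed.

Lemma nbhs_rmul a x B : nbhs (x ** a) B -> nbhs x [set y | B (y ** a)].
Proof.
move=> /near_mul [P [Q [Px Qa PQB]]]; apply: filterS Px => y Py.
exact: PQB Py (nbhs_singleton Qa).
Qed.

Lemma lmul_continuous a : continuous (mul a).
Proof. by move=> x B /nbhs_lmul. Qed.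

Lemma subgroup_open S : subgroup S -> nbhs one S -> open S.
Proof.
move=> sS S1; rewrite openE => x Sx.
have : nbhs (inv x ** x) S by rewrite tmulVg.
by move=> /nbhs_lmul; apply: filterS => y; exact: subgroupMl (subgroupV sS Sx).
Qed.

Lemma open_in_closed H K : subgroup H -> closed H -> subgroup K -> K `<=` H ->
  open_in H K -> closed K.
Proof.
move=> sH cH sK KH [U [oU KE]].
have U1 : U one by move: (subgroup1 sK); rewrite KE => -[].
rewrite (closure_id K); apply/seteqP; split=> [|x Kx]; first exact: subset_closure.
have Hx : H x by rewrite (closure_id H).1 //; exact: (closureS KH).
have : nbhs (x ** inv x) U by rewrite tmulgV; exact: open_nbhs_nbhs.
move=> /nbhs_rmul /Kx [k [Kk /= Uk]].
have Kkx : K (k ** inv x).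
  by rewrite KE; split => //; exact: (subgroupM sH (KH _ Kk) (subgroupV sH Hx)).
have := subgroupM sK (subgroupV sK Kkx) Kk.
by rewrite tinvMg tinvgK tmulgKV.
Qed.

Lemma closure_subgroup A : subgroup A -> subgroup (closure A).
Proof.
move=> sA; split; first exact: subset_closure (subgroup1 sA).
- move=> x y Cx Cy B /near_mul [P [Q [Px Qy PQB]]].
  have [a [Aa Pa]] := Cx P Px; have [b [Ab Qb]] := Cy Q Qy.
  by exists (a ** b); split; [exact: subgroupM|exact: PQB].
- move=> x Cx B /(@inv_continuous x) /Cx [a [Aa /= Ba]].
  by exists (inv a); split => //; exact: subgroupV.
Qed.

Lemma top_gen_subgroup A : subgroup (top_gen A).
Proof. exact: closure_subgroup (abs_gen_subgroup A). Qed.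

Section CosetPreimage.
Variables (I : finType) (Q : normal_transversal I) (H : set T).
Hypothesis sH : subgroup H.
Local Notation W := (nt_ker Q).
Local Notation sW := (nt_subgroup Q).
Local Notation phi := (coset_perm Q).
Local Notation image := (coset_image Q).

Definition coset_preimage (X : {set {perm I}}) := [set x | H x /\ phi x \in X].

Lemma coset_preimage_open_subgroup (X : {group {perm I}}) :
  open_subgroup_of H (coset_preimage X).
Proof.
split=> [|x []//|]; first split=> [|x y [Hx Xx] [Hy Xy]|x [Hx Xx]].
- by split; [exact: (subgroup1 sH)|rewrite coset_perm1 group1].
- by split; [exact: (subgroupM sH Hx Hy)|rewrite coset_permM groupM].
- by split; [exact: (subgroupV sH Hx)|rewrite coset_permV groupV].
exists [set x | phi x \in X]; split => //; rewrite openE => x Xx.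
have : nbhs (inv x ** x) W.
  by rewrite tmulVg; apply: open_nbhs_nbhs; split; [exact: nt_open|exact: (subgroup1 sW)].
by move=> /nbhs_lmul; apply: filterS => y /coset_perm_eqP /= <-.
Qed.

Lemma coset_preimage_ker (X : {group {perm I}}) y : W y -> H y -> coset_preimage X y.
Proof.
move=> Wy Hy; split => //; suff -> : phi y = phi one by rewrite coset_perm1 group1.
by symmetry; apply/coset_perm_eqP; rewrite tinvg1 tmul1g.
Qed.

Lemma coset_image_preimage (X : {set {perm I}}) :
  X \subset image H -> image (coset_preimage X) = X.
Proof.
move=> /fintype.subsetP XH; apply/setP => s; apply/idP/idP => [/coset_imageP [a [_ Xa] <-]//|Xs].
have /coset_imageP [a Ha aE] := XH s Xs.
by move: Xs; rewrite -aE => Xa; apply: (mem_coset_image Q).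
Qed.

(* The correspondence theorem for the finite quotient [H / (H :&: W)]. *)
Lemma maximal_coset_image N (sN : subgroup N) : maximal_open H N ->
  (forall y, W y -> H y -> N y) ->
  maximal (coset_image_group Q sN) (coset_image_group Q sH).
Proof.
move=> [[_ NH oN] NneH maxN] WN.
have : maximal_eq (coset_image_group Q sN) (coset_image_group Q sH).
  apply/maximal_eqP; split=> [|X NX XH]; first exact: coset_imageS.
  have [sL LH oL] := coset_preimage_open_subgroup X.
  have NL : N `<=` coset_preimage X.
    move=> x Nx; split; first exact: NH.
    by apply: (fintype.subsetP NX); exact: (mem_coset_image Q Nx).
  have imL := coset_image_preimage XH.
  by case: (maxN _ (And3 sL LH oL) NL) => LE; [left|right]; apply/val_inj; rewrite /= -imL LE.
case/orP => [/eqP NHb|//]; exfalso; apply: NneH; apply/seteqP; split => // h Hh.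
by apply: (coset_image_lift sH sN NH WN Hh); rewrite NHb (mem_coset_image Q).
Qed.

Lemma maximal_coset_preimage (M : {group {perm I}}) :
  maximal M (coset_image_group Q sH) ->
  maximal_open H (coset_preimage M).
Proof.
move=> maxM; have [MH MneH] := andP (maxgroupp maxM).
have [sM' M'H oM'] := coset_preimage_open_subgroup M.
have imM : image (coset_preimage M) = M by exact: coset_image_preimage.
have WM' := @coset_preimage_ker M.
split=> // [M'eH|L [sL LH oL] M'L]; first by move/negP: MneH; apply; rewrite -imM M'eH.
have WL y : W y -> H y -> L y by move=> Wy Hy; exact/M'L/WM'.
have /maximal_eqP [_ /(_ (coset_image_group Q sL))] : maximal_eq M (coset_image_group Q sH).
  by rewrite /maximal_eq maxM orbT.
case=> [||LM|LH']; [by rewrite -imM; exact: coset_imageS|exact: coset_imageS| |].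
  left; apply/seteqP; split=> //.
  by apply: (sub_of_coset_image_sub sH sM' M'H WM' LH); rewrite imM -LM.
right; apply/seteqP; split=> //.
by apply: (sub_of_coset_image_sub sH sL LH WL (fun _ h => h)); rewrite -LH'.
Qed.

End CosetPreimage.

Section Profinite.
Hypotheses (T_compact : compact [set: T]) (T_hausdorff : hausdorff_space T)
  (T_totally_disconnected : totally_disconnected [set: T]).

Lemma nbhs_fst (x y : T) B : nbhs x B -> nbhs ((x, y) : T * T) (fun z : T * T => B z.1).
Proof. by move=> Bx; exists (B, setT) => [|[a b] []] //; split => //; exact: filterT. Qed.

Lemma nbhs_mul_pair x y B : nbhs (x ** y) B ->
  nbhs ((x, y) : T * T) (fun z : T * T => B (z.1 ** z.2)).
Proof. exact: (@mul_continuous (x, y)). Qed.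

(* Compactness makes a neighbourhood of [one] uniform in the second variable. *)
Lemma nbhs1_uniform (P : T -> T -> Prop) :
  (forall x, nbhs ((x, one) : T * T) (fun z : T * T => P z.2 z.1)) ->
  nbhs one [set i | forall x, P i x].
Proof.
move=> Pnear; have := (compact_near_coveringP _).1 T_compact T (nbhs one) P _.
move=> /(_ _ (fun x _ => Pnear x)).
by apply: filterS => i /= Pi x; exact: Pi.
Qed.

Definition right_stabilizer (C : set T) := [set g | forall x, C x <-> C (x ** g)].

Lemma right_stabilizer_subgroup C : subgroup (right_stabilizer C).
Proof.
split=> [x|a b Sa Sb x|a Sa x]; first by rewrite tmulg1.
- by rewrite tmulgA; split=> [/(Sa x).1 /(Sb (x ** a)).1|/(Sb (x ** a)).2 /(Sa x).2].
- by rewrite -{1}(tmulgKV a x); split=> [/(Sa (x ** inv a)).2|/(Sa (x ** inv a)).1].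
Qed.

Lemma right_stabilizer_sub C : C one -> right_stabilizer C `<=` C.
Proof. by move=> C1 g /(_ one) [+ _] => /(_ C1); rewrite tmul1g. Qed.

Lemma right_stabilizer_nbhs1 C : clopen C -> nbhs one (right_stabilizer C).
Proof.
move=> [oC cC]; apply: nbhs1_uniform => x.
have near_in O : open O -> O x ->
    nbhs ((x, one) : T * T) (fun z : T * T => O z.1 /\ O (z.1 ** z.2)).
  move=> oO Ox; apply: filterI; first exact/nbhs_fst/open_nbhs_nbhs.
  by apply: nbhs_mul_pair; rewrite tmulg1; exact: open_nbhs_nbhs.
have [Cx|nCx] := pselect (C x).
  by apply: filterS (near_in C oC Cx) => z [].
by apply: filterS (near_in _ (closed_openC cC) nCx) => z [].
Qed.

Definition normal_core (S : set T) := [set g | forall x, S (x ** g ** inv x)].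

Lemma normal_core_subgroup S : subgroup S -> subgroup (normal_core S).
Proof.
move=> sS; split=> [x|a b Na Nb x|a Na x]; first by rewrite tmulg1 tmulgV; exact: subgroup1.
- have -> : x ** (a ** b) ** inv x = (x ** a ** inv x) ** (x ** b ** inv x).
    by rewrite !tmulgA tmulgKV.
  exact: subgroupM (Na x) (Nb x).
- have -> : x ** inv a ** inv x = inv (x ** a ** inv x) by rewrite !tinvMg tinvgK tmulgA.
  exact: subgroupV (Na x).
Qed.

Lemma normal_core_normal S : is_normal mul inv (normal_core S).
Proof.
move=> g a Na y.
have -> : y ** (inv g ** a ** g) ** inv y = (y ** inv g) ** a ** inv (y ** inv g).
  by rewrite tinvMg tinvgK !tmulgA.
exact: Na.
Qed.

Lemma normal_core_sub S : normal_core S `<=` S.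
Proof. by move=> g /(_ one); rewrite tmul1g tinvg1 tmulg1. Qed.

Lemma normal_core_nbhs1 S : nbhs one S -> nbhs one (normal_core S).
Proof.
move=> S1; apply: nbhs1_uniform => x.
have : nbhs (x ** one ** inv x) S by rewrite tmulg1 tmulgV.
move=> /near_mul [P [Q [Pn Qn PQS]]].
apply: filterS (filterI (nbhs_mul_pair Pn) (nbhs_fst one (@inv_continuous x _ Qn))).
by move=> z /= [Pz Qz]; exact: PQS.
Qed.

Lemma open_normal_sub U : open U -> U one ->
  exists W, [/\ subgroup W, is_normal mul inv W, open W & W `<=` U].
Proof.
move=> oU U1.
have [C [cC C1 CU]] := clopen_nbhs_sub T_compact T_hausdorff T_totally_disconnected oU U1.
pose W := normal_core (right_stabilizer C).
have sW : subgroup W := normal_core_subgroup (right_stabilizer_subgroup C).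
exists W; split => //; first exact: normal_core_normal.
  exact/(subgroup_open sW)/normal_core_nbhs1/right_stabilizer_nbhs1.
by move=> g /normal_core_sub /(right_stabilizer_sub C1) /CU.
Qed.

Section OpenSubgroupTransversal.
Variables (H K : set T).
Hypotheses (sH : subgroup H) (cH : closed H) (oK : open_subgroup_of H K).

Let sK : subgroup K. Proof. by case: oK. Qed.

Lemma open_subgroup_finite_cover : exists R : seq T,
  (forall r, r \in R -> H r) /\ forall y, H y -> exists2 r, r \in R & K (y ** inv r).
Proof.
have [_ KH [U [oU KE]]] := oK.
have U1 : U one by move: (subgroup1 sK); rewrite KE => -[].
have cpH : compact H := subclosed_compact cH T_compact (@subsetT _ _).
have [|D [DH HD]] := @compact_finite_nbhs_cover _ H (fun x => [set y | U (y ** inv x)]) cpH.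
  by move=> x Hx; apply: (@nbhs_rmul (inv x)); rewrite tmulgV; exact: open_nbhs_nbhs.
exists D; split=> // y Hy; have [r Dr /= Uyr] := HD y Hy; exists r => //.
by rewrite KE; split=> //; exact: (subgroupM sH Hy (subgroupV sH (DH r Dr))).
Qed.

(* [rep y] is the first [r] of the finite cover, [one] first, with
   [y \in K r]; re-indexing the cover by [rep] makes [rep] a retraction. *)
Lemma open_subgroup_transversal : exists (R : seq T) (rep : T -> T),
  [/\ one \in R, forall t, t \in R -> H t /\ rep t = t,
      forall y, H y -> rep y \in R /\ K (y ** inv (rep y))
    & forall y z, K (y ** inv z) -> rep y = rep z].
Proof.
have [R0 [R0H R0cov]] := open_subgroup_finite_cover.
pose R1 := one :: R0; pose rep y := nth one R1 (find (fun r => `[< K (y ** inv r) >]) R1).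
have R1H r : r \in R1 -> H r by rewrite inE => /orP [/eqP ->|/R0H]; [exact: subgroup1|].
have repE y z : K (y ** inv z) -> rep y = rep z.
  move=> Kyz; congr nth; apply: eq_find => r; apply/asboolP/asboolP => Kr.
    by have := subgroupM sK (subgroupV sK Kyz) Kr; rewrite tinvMg tinvgK tmulgA tmulgKV.
  by have := subgroupM sK Kyz Kr; rewrite tmulgA tmulgKV.
have repP y : H y -> rep y \in R1 /\ K (y ** inv (rep y)).
  move=> Hy; have hasy : has (fun r => `[< K (y ** inv r) >]) R1.
    by have [r r0 Kr] := R0cov y Hy; apply/hasP; exists r; rewrite ?inE ?r0 ?orbT //; exact/asboolP.
  by split; [rewrite mem_nth // -has_find|exact/asboolP/(nth_find one hasy)].
have rep1 : rep one = one.
  by rewrite /rep /= ifT //; apply/asboolP; rewrite tinvg1 tmulg1; exact: subgroup1.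
have repK y : H y -> rep (rep y) = rep y.
  by move=> /repP [_ Ky]; apply: repE; have := subgroupV sK Ky; rewrite tinvMg tinvgK.
exists [seq rep r | r <- R1], rep; split.
- by apply/mapP; exists one; rewrite ?inE ?eqxx.
- by move=> _ /mapP [r r1 ->]; have [/R1H ? _] := repP r (R1H r r1); split=> //; exact/repK/R1H.
- by move=> y Hy; have [r1 Ky] := repP y Hy; split=> //; rewrite -repK //; exact: map_f.
- exact: repE.
Qed.

End OpenSubgroupTransversal.

Section Schreier.
Variables (H K : set T) (R : seq T) (rep : T -> T) (n : nat) (s : 'I_n -> T).
Hypotheses (sH : subgroup H) (sK : subgroup K) (R1 : one \in R)
  (RH : forall t, t \in R -> H t /\ rep t = t)
  (repR : forall y, H y -> rep y \in R /\ K (y ** inv (rep y)))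
  (rep_eq : forall y z, K (y ** inv z) -> rep y = rep z)
  (Hs : forall j, H (s j)).

Definition schreier_gens := [seq t ** s j ** inv (rep (t ** s j)) | t <- R, j <- enum 'I_n].

Lemma schreier_gens_sub g : g \in schreier_gens -> K g.
Proof.
move=> /allpairsP [[t j] [/= /RH [Ht _] _ ->]].
by case: (repR (subgroupM sH Ht (Hs j))).
Qed.

Let A := abs_gen [set g | g \in schreier_gens].
Let sA : subgroup A := abs_gen_subgroup _.

Lemma rep_mul t x : H t -> rep (rep t ** x) = rep (t ** x).
Proof.
move=> Ht; apply: rep_eq; have [_ Kt] := repR Ht.
by have := subgroupV sK Kt; rewrite !tinvMg !tinvgK !tmulgA tmulgK.
Qed.

(* Schreier's lemma: the [x] whose twisted conjugates [t x (rep (t x))^-1] all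
   lie in [A] form a subgroup; it contains the [s j], and [t = one] then shows
   that [K] meets [abs_gen (range s)] inside [A]. *)
Lemma schreier_subgroup :
  subgroup [set x | H x /\ forall t, t \in R -> A (t ** x ** inv (rep (t ** x)))].
Proof.
split=> [|x y [Hx Ax] [Hy Ay]|x [Hx Ax]].
- split=> [|t tR]; first exact: subgroup1.
  by rewrite tmulg1 (RH tR).2 tmulgV; exact: subgroup1.
- split=> [|t tR]; first exact: subgroupM.
  have Htx : H (t ** x) by exact: (subgroupM sH (RH tR).1 Hx).
  have := subgroupM sA (Ax t tR) (Ay _ (repR Htx).1).
  by rewrite rep_mul // !tmulgA tmulgKV.
- split=> [|t tR]; first exact: subgroupV.
  have Htx : H (t ** inv x) by exact: (subgroupM sH (RH tR).1 (subgroupV sH Hx)).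
  have rtE : rep (rep (t ** inv x) ** x) = t by rewrite rep_mul // tmulgKV (RH tR).2.
  have := subgroupV sA (Ax _ (repR Htx).1); rewrite rtE.
  by rewrite !tinvMg !tinvgK !tmulgA.
Qed.

Lemma schreier_abs_gen : K `&` abs_gen (range s) `<=` A.
Proof.
have : abs_gen (range s) `<=`
    [set x | H x /\ forall t, t \in R -> A (t ** x ** inv (rep (t ** x)))].
  apply: abs_gen_subG schreier_subgroup _ => _ [j _ <-]; split=> // t tR.
  by apply: sub_abs_gen; apply: allpairs_f => //; rewrite mem_enum.
move=> sQ y [Ky /sQ [_ /(_ one R1)]]; rewrite tmul1g.
have -> : rep y = one by rewrite -(RH R1).2; apply: rep_eq; rewrite tinvg1 tmulg1.
by rewrite tinvg1 tmulg1.
Qed.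

End Schreier.

Lemma fin_gen_subgroup H : fin_gen H -> subgroup H /\ closed H.
Proof. by case=> n [s <-]; split; [exact: top_gen_subgroup|exact: top_gen_closed]. Qed.

Lemma fin_gen_open_subgroup H K : fin_gen H ->
  open_subgroup_of H K -> fin_gen K.
Proof.
move=> fgH oK; have [sH cH] := fin_gen_subgroup fgH.
have [sK KH oKH] := oK; have [U [oU KE]] := oKH.
have cK : closed K := open_in_closed sH cH sK KH oKH.
have [R [rep [R1 RH repR rep_eq]]] := open_subgroup_transversal sH cH oK.
have [n [s sE]] := fgH.
have Hs j : H (s j) by rewrite -sE; apply: sub_top_gen; exists j.
set gens := schreier_gens R rep s.
exists (size gens), (fun k => nth one gens k).
have -> : range (fun k : 'I_(size gens) => nth one gens k) = [set g | g \in gens].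
  apply/seteqP; split=> [_ [k _ <-]|g gG]; first exact: mem_nth.
  by exists (Ordinal (etrans (index_mem g gens) gG)); rewrite //= nth_index.
apply/seteqP; split.
  by apply: top_gen_subG sK cK _ => g; exact: (schreier_gens_sub sH RH repR Hs).
move=> x Kx B Bx.
have Ux : nbhs x U by apply: open_nbhs_nbhs; split=> //; move: Kx; rewrite KE => -[].
have Hcl : closure (abs_gen (range s)) x by rewrite -[closure _]/(top_gen _) sE; exact: KH.
have [y [sy [By Uy]]] := Hcl _ (filterI Bx Ux); exists y; split=> //.
have Ky : K y by rewrite KE; split=> //; rewrite -sE; exact: subset_closure.
by apply: (schreier_abs_gen sH sK R1 RH repR rep_eq Hs).
Qed.

Section ProP.
Variable p : nat.
Hypotheses (p_prime : prime p)
  (T_index : forall N, subgroup N -> is_normal mul inv N -> open N -> index_is_p_power mul p N).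

Lemma open_normal_transversal_sub U : open U -> U one ->
  exists k (Q : normal_transversal 'I_(p ^ k)), nt_ker Q `<=` U.
Proof.
move=> oU U1; have [W [sW nW oW WU]] := open_normal_sub oU U1.
have [k [f Wf]] := T_index sW nW oW.
by exists k, (NormalTransversal sW nW oW Wf).
Qed.

(* Maximal open subgroups are detected in finite p-quotients, where the
   Frattini subgroup lies in every maximal subgroup. *)
Lemma maximal_open_Phi H N x (sH : subgroup H) : maximal_open H N ->
  H x -> (forall I (Q : normal_transversal I), pgroup p (coset_image_group Q sH) ->
    coset_perm Q x \in 'Phi(coset_image_group Q sH)%g) -> N x.
Proof.
move=> maxN Hx xPhi; have [[sN NH [U [oU NE]]] _ _] := maxN.
have [|k [Q WU]] := @open_normal_transversal_sub U oU.
  by move: (subgroup1 sN); rewrite NE => -[].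
have WN y : nt_ker Q y -> H y -> N y by move=> Wy Hy; rewrite NE; split=> //; exact: WU.
have pH : pgroup p (coset_image_group Q sH).
  by apply: (coset_image_pgroup Q sH _ p_prime); rewrite card_ord.
apply: (coset_image_lift sH sN NH WN Hx).
apply: (fintype.subsetP (Phi_sub_max (maximal_coset_image sH sN maxN WN))).
exact: xPhi.
Qed.

Section MaximalOpen.
Variables (H N : set T).
Hypotheses (sH : subgroup H) (maxN : maximal_open H N).

Lemma maximal_open_texp x : H x -> N (texp x p).
Proof.
move=> Hx; apply: (maximal_open_Phi maxN (subgroupX sH p Hx)) => I Q pH.
rewrite coset_permX (Phi_joing pH); apply: (fintype.subsetP (joing_subr _ _)).
have Hx' : coset_perm Q x \in coset_image_group Q sH by exact: mem_coset_image.
by have := Mho_p_elt 1 Hx' (mem_p_elt pH Hx'); rewrite expn1.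
Qed.

Lemma maximal_open_commutator x y : H x -> H y -> N (inv x ** inv y ** x ** y).
Proof.
move=> Hx Hy; have Hxy : H (inv x ** inv y ** x ** y).
  by do 2 apply: (subgroupM sH) => //; exact: subgroupM (subgroupV sH Hx) (subgroupV sH Hy).
apply: (maximal_open_Phi maxN Hxy) => I Q pH.
have -> : coset_perm Q (inv x ** inv y ** x ** y) = [~ coset_perm Q x, coset_perm Q y]%g.
  by rewrite !coset_permM !coset_permV /commg /conjg !mulgA.
rewrite (Phi_joing pH); apply: (fintype.subsetP (joing_subl _ _)); rewrite derg1.
by apply: mem_commg; exact: mem_coset_image.
Qed.

Lemma maximal_open_conj a y : H a -> N y -> N (a ** y ** inv a).
Proof.
move=> Ha Ny; have [[sN NH _] _ _] := maxN.
have := maximal_open_commutator (subgroupV sH Ha) (subgroupV sH (NH _ Ny)).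
by rewrite !tinvgK => /(subgroupM sN)/(_ Ny); rewrite tmulgKV.
Qed.

End MaximalOpen.

Lemma maximal_open_exists H X : subgroup H -> closed H -> X `<=` H -> top_gen X <> H ->
  exists2 M, maximal_open H M & top_gen X `<=` M.
Proof.
set L := top_gen X => sH cH XH LneH.
have sL : subgroup L := @top_gen_subgroup X.
have LH : L `<=` H := top_gen_subG sH cH XH.
have [h Hh nLh] : exists2 h, H h & ~ L h.
  apply: contrapT => nex; apply: LneH; apply/seteqP; split => // h Hh.
  by apply: contrapT => nLh; apply: nex; exists h.
pose U := [set z | ~ L (h ** inv z)].
have oU : open U.
  have ct : continuous (mul h \o inv).
    by move=> z; exact: continuous_comp (@inv_continuous z) (@lmul_continuous h (inv z)).
  by move: ((continuousP _).1 ct _ (closed_openC (@top_gen_closed X))); apply.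
have [|k [Q WU]] := open_normal_transversal_sub oU; first by rewrite /U /= tinvg1 tmulg1.
have nLh' : coset_perm Q h \notin coset_image Q L.
  apply/negP => /coset_imageP [a La /coset_perm_eqP /WU].
  by rewrite /U /= tinvMg tinvgK tmulKVg.
have LHb : coset_image_group Q sL \subset coset_image_group Q sH := coset_imageS Q LH.
have [e|[M maxM LM]] := maximal_exists LHb.
  by move: nLh'; rewrite e mem_coset_image.
exists (coset_preimage Q H M); first exact: maximal_coset_preimage.
move=> l Ll; split; first exact: LH.
by apply: (fintype.subsetP LM); exact: (mem_coset_image Q Ll).
Qed.

Lemma p_gt0 : (0 < p)%N. Proof. exact: prime_gt0. Qed.

Lemma Frattini_sub X : Frattini X `<=` X. Proof. by move=> y []. Qed.

Lemma Frattini_maximal X N : maximal_open X N -> Frattini X `<=` N.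
Proof. by move=> maxN y [_]; apply. Qed.

Lemma FrattiniP X y : X y -> (forall N, maximal_open X N -> N y) -> Frattini X y.
Proof. by move=> Xy yN; split => // N; exact: yN. Qed.

Lemma Frattini_texp X z : subgroup X -> X z -> Frattini X (texp z p).
Proof.
move=> sX Xz; apply: FrattiniP => [|N maxN]; first exact: subgroupX.
exact: (maximal_open_texp sX maxN Xz).
Qed.

(* [texp_join A x] is [<x> A] once [A] is normalised by [x] and [x ^ p \in A]. *)
Definition texp_join (A : set T) x := [set z | exists i, A (texp x i ** z)].

Lemma texp_join_subgroup H A x : subgroup H -> subgroup A -> A `<=` H ->
  (forall a w, H a -> A w -> A (a ** w ** inv a)) -> H x -> A (texp x p) ->
  subgroup (H `&` texp_join A x).
Proof.
move=> sH sA AH nA Hx Axp; have Hxi i : H (texp x i) by exact: subgroupX.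
split=> [|z1 z2 [Hz1 [i Ai]] [Hz2 [j Aj]]|z [Hz [i Ai]]].
- by split; [exact: subgroup1|exists 0%N; rewrite /= tmulg1; exact: subgroup1].
- split; first exact: subgroupM.
  exists (j + i)%N; rewrite texpD -tmulgA tmulgA.
  by have := subgroupM sA (nA _ _ (Hxi j) Ai) Aj; rewrite !tmulgA tmulgKV.
- split; first exact: subgroupV.
  exists (p.-1 * i)%N.
  have Axpi : A (texp x (p.-1 * i) ** texp x i).
    by rewrite -texpD -mulSnr prednK ?p_gt0 // texpM; exact: subgroupX.
  have := subgroupM sA (nA _ _ (Hxi (p.-1 * i)%N) (subgroupV sA Ai)) Axpi.
  by rewrite tinvMg !tmulgA !tmulgKV.
Qed.

Lemma texp_join_closed A x : subgroup A -> closed A -> A (texp x p) ->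
  closed (texp_join A x).
Proof.
move=> sA cA Axp.
have -> : texp_join A x = \bigcup_(i in `I_p) [set z | A (texp x i ** z)].
  apply/seteqP; split=> [z [i Ai]|z [i _ Ai]]; last by exists i.
  exists (i %% p)%N; first by rewrite /= ltn_mod p_gt0.
  move: Ai; rewrite {1}(divn_eq i p) texpD mulnC texpM -tmulgA.
  exact: (subgroupMl sA (subgroupX sA _ Axp)).
apply: closed_bigcup => [|i _]; first exact: finite_II.
exact: (continuous_closedP _).1 (@lmul_continuous (texp x i)) _ cA.
Qed.

Section MaximalOpenCover.
Variables (H N : set T) (x : T).
Hypotheses (sH : subgroup H) (maxN : maximal_open H N) (Hx : H x) (nNx : ~ N x).

Lemma maximal_open_texp_cover y : H y -> exists i, N (texp x i ** y).
Proof.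
have [[sN NH [U [oU NE]]] _ maxN'] := maxN.
pose S := H `&` texp_join N x.
have sS : subgroup S.
  apply: texp_join_subgroup => //; first exact: (maximal_open_conj sH maxN).
  exact: (maximal_open_texp sH maxN Hx).
have oS : open_in H S.
  exists [set z | exists i, U (texp x i ** z)]; split.
    rewrite openE => z [i Ui]; have : nbhs (texp x i ** z) U by exact: open_nbhs_nbhs.
    by move=> /nbhs_lmul; apply: filterS => w Uw; exists i.
  apply/seteqP; split=> z [Hz [i xzi]]; split=> //; exists i; first by move: xzi; rewrite NE => -[].
  by rewrite NE; split=> //; exact: (subgroupM sH (subgroupX sH i Hx) Hz).
have NS : N `<=` S by move=> z Nz; split; [exact: NH|exists 0%N; rewrite /= tmul1g].
have Sx : S x.
  split=> //; exists p.-1; rewrite -texpSr prednK ?p_gt0 //.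
  exact: (maximal_open_texp sH maxN Hx).
have SH : S `<=` H by move=> z [].
case: (maxN' _ (And3 sS SH oS) NS) => SE; first by move: Sx; rewrite SE.
by move=> Hy; have [_] : S y by rewrite SE.
Qed.

End MaximalOpenCover.

Lemma maximal_openI H M N : subgroup H -> maximal_open H M -> maximal_open H N ->
  M <> N -> maximal_open M (M `&` N).
Proof.
move=> sH maxM maxN MneN.
have [[sM MH _] _ maxM'] := maxM; have [oN NneH _] := maxN.
have [sN NH [U [oU NE]]] := oN.
split.
- split=> [||]; [exact: subgroupI|by move=> z []|exists U; split=> //].
  by rewrite NE setIA (setIidl MH).
- move=> MNeM; have MN : M `<=` N by rewrite -MNeM => z [].
  by case: (maxM' _ oN MN) => NE'; [exact: MneN (esym NE')|exact: NneH].
- move=> L [sL LM oL] MNL; have [LN|/existsNP [x /not_implyP [Lx nNx]]] := pselect (L `<=` N).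
    by left; apply/seteqP; split=> // z Lz; split; [exact: LM|exact: LN].
  right; apply/seteqP; split=> // y My.
  have [i Nxy] := maximal_open_texp_cover sH maxN (MH _ (LM _ Lx)) nNx (MH _ My).
  have Lxi : L (texp x i) by exact: subgroupX.
  by apply: (subgroupMl sL Lxi); apply: MNL; split=> //; exact: (subgroupM sM (LM _ Lxi) My).
Qed.

Lemma Frattini_maximal_sub H M : subgroup H -> maximal_open H M ->
  Frattini M `<=` Frattini H.
Proof.
move=> sH maxM y PMy; have My := Frattini_sub PMy.
apply: FrattiniP => [|N maxN]; first by case: maxM => -[_ MH _] _ _; exact: MH.
have [<-//|MneN] := pselect (M = N).
by have [] := Frattini_maximal (maximal_openI sH maxM maxN MneN) PMy.
Qed.

Lemma maximal_open_texp_maximal H M M0 z : subgroup H -> maximal_open H M ->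
  maximal_open H M0 -> M z -> M0 (texp z p).
Proof.
move=> sH maxM maxM0 Mz; apply: (Frattini_maximal maxM0).
by apply: (Frattini_maximal_sub sH maxM); apply: Frattini_texp => //; case: maxM => -[].
Qed.

Lemma subgroup_texp_coprime N x i : subgroup N -> N (texp x i) -> N (texp x p) ->
  coprime i p -> N x.
Proof.
move=> sN Nxi Nxp copi.
have [a _] := Bezoutr i p_gt0; rewrite (eqP copi) => /dvdnP [b abE].
have : N (texp x (b * p)) by rewrite mulnC texpM; exact: subgroupX.
rewrite -abE add1n /=; apply: (subgroupMr sN).
by rewrite mulnC texpM; exact: subgroupX.
Qed.

Section MaximalOpenGenerators.
Variables (H M : set T) (n : nat) (m : 'I_n -> T).
Hypotheses (sH : subgroup H) (cH : closed H) (maxM : maximal_open H M)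
  (Mgen : top_gen (range m) = M).

Let sM : subgroup M. Proof. by case: maxM => -[]. Qed.
Let MH : M `<=` H. Proof. by case: maxM => -[]. Qed.
Let cM : closed M. Proof. by case: maxM => -[? ? ?] _ _; exact: (open_in_closed sH cH). Qed.
Let Mm j : M (m j). Proof. by rewrite -Mgen; apply: sub_top_gen; exists j. Qed.

(* With [x := m j0] and [A := M0 :&: N], the subgroup [<x> A] of [M] contains
   every generator, hence all of [M]; comparing [x]-exponents gives [N <= M0]. *)
Lemma maximal_open_sub_of_gens M0 N j0 : maximal_open H M0 -> maximal_open M N ->
  ~ N (m j0) -> (forall j, j != j0 -> exists i, (M0 `&` N) (texp (m j0) i ** m j)) ->
  N `<=` M0.
Proof.
move=> maxM0 maxN nNx gA; set x := m j0; pose A := M0 `&` N.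
have [[sM0 M0H oM0] _ _] := maxM0; have [[sN NM oN] _ _] := maxN.
have sA : subgroup A := subgroupI sM0 sN.
have cA : closed A.
  by apply: closedI; [exact: (open_in_closed sH cH)|exact: (open_in_closed sM cM)].
have Apw z : M z -> A (texp z p).
  move=> Mz; split; first exact: (maximal_open_texp_maximal sH maxM maxM0 Mz).
  exact: (maximal_open_texp sM maxN Mz).
have sS : subgroup (M `&` texp_join A x).
  apply: texp_join_subgroup => //; [by move=> z [_ /NM]| |exact: Mm|exact/Apw/Mm].
  move=> a w Ma [M0w Nw]; split; first exact: (maximal_open_conj sH maxM0 (MH Ma) M0w).
  exact: (maximal_open_conj sM maxN Ma Nw).
have cS : closed (M `&` texp_join A x).
  by apply: closedI => //; exact: (texp_join_closed sA cA (Apw _ (Mm j0))).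
have MS : M `<=` M `&` texp_join A x.
  rewrite -{1}Mgen; apply: top_gen_subG sS cS _ => _ [j _ <-]; split; first exact: Mm.
  have [->|/gA //] := eqVneq j j0.
  by exists p.-1; rewrite -texpSr prednK ?p_gt0 //; exact: (Apw _ (Mm j0)).
move=> z Nz; have [_ [i [M0xz Nxz]]] := MS _ (NM _ Nz).
have Nxi : N (texp x i) := subgroupMr sN Nz Nxz.
have [pi|npi] := boolP (p %| i)%N.
  have [M0xi _] : A (texp x i).
    by rewrite -(divnK pi) mulnC texpM; exact: (subgroupX sA _ (Apw _ (Mm j0))).
  exact: (subgroupMl sM0 M0xi M0xz).
case: nNx; apply: (subgroup_texp_coprime sN Nxi (Apw _ (Mm j0)).2).
by rewrite coprime_sym prime_coprime.
Qed.

Lemma Frattini_sub_of_not_gen : ~ gen_by H n -> Frattini H `<=` Frattini M.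
Proof.
move=> ngen y Py; have My := Frattini_maximal maxM Py.
apply: FrattiniP => // N maxN; apply: contrapT => nNy; apply: ngen.
have [[sN NM oN] NneM _] := maxN; have [oM MneH maxM'] := maxM.
have [j0 nNx] : exists j0, ~ N (m j0).
  apply: contrapT => allN; apply: NneM; apply/seteqP; split=> //.
  rewrite -{1}Mgen; apply: top_gen_subG sN (open_in_closed sM cM sN NM oN) _ => _ [j _ <-].
  by apply: contrapT => nNj; apply: allN; exists j.
have [ij Nij] := choice (fun j => maximal_open_texp_cover sM maxN (Mm j0) nNx (Mm j)).
have [h Hh nMh] : exists2 h, H h & ~ M h.
  apply: contrapT => nex; apply: MneH; apply/seteqP; split=> // h Hh.
  by apply: contrapT => nMh; apply: nex; exists h.
pose g j := if j == j0 then h else texp (m j0) (ij j) ** m j.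
exists g; apply: contrapT => gneH.
have gH : range g `<=` H.
  move=> _ [j _ <-]; rewrite /g; case: ifP => // _.
  exact/MH/(subgroupM sM (subgroupX sM _ (Mm j0)) (Mm j)).
have [M0 maxM0 gM0] := maximal_open_exists sH cH gH gneH.
have M0g j : M0 (g j) by apply: gM0; apply: sub_top_gen; exists j.
have NM0 : N `<=` M0.
  apply: (maximal_open_sub_of_gens maxM0 maxN nNx) => j /negbTE jj0.
  by exists (ij j); split; [move: (M0g j); rewrite /g jj0|exact: Nij].
have MM0 : M `<=` M0.
  move=> w Mw; have [i Nyw] := maximal_open_texp_cover sM maxN My nNy Mw.
  have [[sM0 _ _] _ _] := maxM0.
  exact: (subgroupMl sM0 (subgroupX sM0 i (Frattini_maximal maxM0 Py)) (NM0 _ Nyw)).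
have [oM0 M0neH _] := maxM0.
case: (maxM' M0 oM0 MM0) => // M0E; apply: nMh; rewrite -M0E.
by have := M0g j0; rewrite /g eqxx.
Qed.

Lemma maximal_open_gen_by : Frattini_injective mul inv one ->
  fin_gen H -> gen_by H n.
Proof.
move=> FI fgH; apply: contrapT => ngen; have [_ MneH _] := maxM.
apply/MneH/(FI M H) => //; first by exists n, m.
by apply/seteqP; split; [exact: Frattini_maximal_sub|exact: Frattini_sub_of_not_gen].
Qed.

End MaximalOpenGenerators.

(* Climb from [K] to [H] through maximal open subgroups, by induction on the
   size of the image in a finite quotient whose kernel meets [H] inside [K]. *)
Lemma gen_by_open_subgroup H K n : Frattini_injective mul inv one ->
  fin_gen H -> open_subgroup_of H K ->
  gen_by K n -> gen_by H n.
Proof.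
move=> FI fgH oK gK; have [sK KH [U [oU KE]]] := oK.
have [sH cH] := fin_gen_subgroup fgH.
have cK : closed K by apply: (open_in_closed sH cH sK KH); exists U.
have [|k [Q WU]] := open_normal_transversal_sub oU.
  by move: (subgroup1 sK); rewrite KE => -[].
have WK y : nt_ker Q y -> H y -> K y by move=> Wy Hy; rewrite KE; split=> //; exact: WU.
suff IH c L : (#|coset_image Q L| <= c)%N -> fin_gen L -> K `<=` L -> L `<=` H ->
    gen_by L n by exact: IH (leqnn _) fgH KH (fun _ h => h).
elim: c L => [|c IH] L cardL fgL KL LH; have [sL cL] := fin_gen_subgroup fgL.
  have : coset_perm Q one \in coset_image Q L by apply: mem_coset_image; exact: subgroup1.
  by move: cardL; rewrite leqn0 => /eqP/cards0_eq ->; rewrite inE.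
have [<-//|KneL] := pselect (K = L).
have [M maxM] : exists2 M, maximal_open L M & top_gen K `<=` M.
  by apply: maximal_open_exists => //; rewrite top_gen_id.
rewrite top_gen_id // => KM.
have [[sM ML oM] MneL _] := maxM.
have [m Mgen] : gen_by M n.
  apply: (IH M _ (fin_gen_open_subgroup fgL (And3 sM ML oM)) KM (subset_trans ML LH)).
  rewrite -ltnS; apply: leq_trans cardL; apply: card_coset_image_lt => // y Wy Ly.
  exact/KM/WK/LH.
exact: maximal_open_gen_by sL cL maxM Mgen FI fgL.
Qed.

End ProP.
End Profinite.
End Topological.
End Group.

Lemma dP H : fin_gen H ->
  gen_by H (d mul inv one H) /\
  forall n, gen_by H n -> (d mul inv one H <= n)%N.
Proof.
move=> [n0 gn0]; have : exists n, `[< gen_by H n >] by exists n0; exact/asboolP.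
case/ex_minnP => n /asboolP gn nmin.
have : [set n | gen_by H n /\ forall m, gen_by H m -> (n <= m)%N] n.
  by split=> // m /asboolP; exact: nmin.
by move/(xgetI 0%N).
Qed.

End TopologicalGroup.

Theorem mainTheorem11 (p : nat) (T : topologicalType) (mul : T -> T -> T)
    (inv : T -> T) (one : T) :
  pro_p_group mul inv one p ->
  Frattini_injective mul inv one ->
  forall H : set T, fin_gen mul inv one H ->
  forall K : set T, open_subgroup_of mul inv one H K ->
  (d mul inv one H <= d mul inv one K)%N.
Proof.
move=> [p_prime [[T_group [mul_cont inv_cont]] T_compact T_hausdorff T_td] T_index].
move=> FI H fgH K oK.
have fgK := fin_gen_open_subgroup T_group mul_cont inv_cont T_compact fgH oK.
have [gK _] := dP fgK; have [_ dH_min] := dP fgH; apply: dH_min.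
exact: (gen_by_open_subgroup T_group mul_cont inv_cont T_compact T_hausdorff T_td
  p_prime T_index FI fgH oK gK).
Qed.
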